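(* For every $\gamma\ge0$, $\bar{\mathcal R}_\gamma=\mathcal R_\gamma$. Equivalently, $\mathcal R_\gamma\times\{\gamma\}$ is exactly the set of triples $(E_1,E_2,E_\Omega)$ with $E_\Omega=\gamma$ that are achievable by fixed-length tests with a rejection option.
   Context: Standing assumptions: $\mathcal X$ is a finite set and $\mathsf P_1,\mathsf P_2$ are two distinct probability mass functions on $\mathcal X$, both with full support. Under hypothesis $H_i$ the observations $X_1,X_2,\dots$ are i.i.d. with law $\mathsf P_i$, and $\mathsf P_i(\cdot)$ denotes probability under $H_i$. $\gamma$-almost-fixed-length region: $(E_1,E_2)\in\mathcal R_\gamma$ if for every $\delta>0$ there exist $l\in\mathbb Z^+$, $C>0$, $n_0$, and for every $n\ge n_0$ a test $(\tau_n,d_n)$ with: - $\tau_n$ a stopping time for the natural filtration of $X_1,X_2,\dots$, and $d_n\in\{1,2\}$ a function of $X_1,\dots,X_{\tau_n}$; - $\tau_n\le Cn^l$; - $\mathsf P_i(\tau_n>n)\le e^{-\gamma n}$ for $i=1,2$; - $\mathsf P_1(d_n=2)\le e^{-(E_1-\delta)n}$; - $\mathsf P_2(d_n=1)\le e^{-(E_2-\delta)n}$. Tests with rejection option: a fixed-length test with rejection option on $n$ samples is a partition of $\mathcal X^n$ into three sets $A_1^n,A_2^n,A_\Omega^n$. On $A_i^n$ it accepts $H_i$; on $A_\Omega^n$ it rejects both hypotheses. Region $\bar{\mathcal R}_\gamma$: for $\gamma\ge0$, $(E_1,E_2)\in\bar{\mathcal R}_\gamma$ if for every $\delta>0$ there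 exist $n_0$ and, for every $n\ge n_0$, such a partition with: - $\mathsf P_1((X_1,\dots,X_n)\in A_2^n)\le e^{-(E_1-\delta)n}$; - $\mathsf P_2((X_1,\dots,X_n)\in A_1^n)\le e^{-(E_2-\delta)n}$; - $\mathsf P_1((X_1,\dots,X_n)\in A_\Omega^n)+\mathsf P_2((X_1,\dots,X_n)\in A_\Omega^n)\le e^{-(\gamma-\delta)n}$. *)

From Stdlib Require Import Reals.
From mathcomp Require Import all_boot.
Set Implicit Arguments. Unset Strict Implicit. Unset Printing Implicit Defensive.

Open Scope R_scope.

Inductive hyp := H1 | H2.
Definition hyp_eqb (a b : hyp) : bool :=
  match a, b with H1, H1 | H2, H2 => true | _, _ => false end.

Definition sumR (T : finType) (F : T -> R) : R := \big[Rplus/0]_(t : T) F t.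

Definition full_pmf (X : finType) (P : X -> R) : Prop :=
  (forall x, 0 < P x) /\ sumR P = 1.

Definition probN (X : finType) (P : X -> R) (N : nat) (A : pred (N.-tuple X)) : R :=
  \big[Rplus/0]_(s : N.-tuple X | A s) \big[Rmult/1]_(i < N) P (tnth s i).

(* A sequential test (tau, d) whose stopping time is bounded by N, viewed as
   a function of the first N samples.  [stop_rule tau d] says tau is a stopping
   time (the event {tau = k} depends only on X_1..X_k) and d is a function of
   X_1..X_tau: both are determined by the first tau samples. *)
Definition stop_rule (X : finType) (N : nat)
  (tau : N.-tuple X -> nat) (d : N.-tuple X -> hyp) : Prop :=
  (forall s, (tau s <= N)%N) /\
  (forall s s' : N.-tuple X,
     (forall i : 'I_N, (i < tau s)%N -> tnth s i = tnth s' i) ->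
     tau s' = tau s /\ d s' = d s).

Definition in_R_gamma (X : finType) (P1 P2 : X -> R) (gamma E1 E2 : R) : Prop :=
  forall delta, 0 < delta ->
  exists (l : nat) (C : R) (n0 : nat),
    (0 < l)%N /\ 0 < C /\
    forall n, (n0 <= n)%N ->
      exists (N : nat) (tau : N.-tuple X -> nat) (d : N.-tuple X -> hyp),
        stop_rule tau d /\
        (forall s, INR (tau s) <= C * INR n ^ l) /\
        probN P1 (fun s => (n < tau s)%N) <= exp (- (gamma * INR n)) /\
        probN P2 (fun s => (n < tau s)%N) <= exp (- (gamma * INR n)) /\
        probN P1 (fun s => hyp_eqb (d s) H2) <= exp (- ((E1 - delta) * INR n)) /\
        probN P2 (fun s => hyp_eqb (d s) H1) <= exp (- ((E2 - delta) * INR n)).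

(* Fixed-length test with rejection option on n samples: a partition of X^n
   into A_1, A_2, A_Omega, encoded as a map to option hyp
   (Some H1 = A_1, Some H2 = A_2, None = A_Omega). *)
Definition is_acc (o : option hyp) (h : hyp) : bool :=
  match o with Some h' => hyp_eqb h' h | None => false end.
Definition is_rej (o : option hyp) : bool :=
  match o with None => true | Some _ => false end.

Definition in_Rbar_gamma (X : finType) (P1 P2 : X -> R) (gamma E1 E2 : R) : Prop :=
  forall delta, 0 < delta ->
  exists n0 : nat,
    forall n, (n0 <= n)%N ->
      exists f : n.-tuple X -> option hyp,
        probN P1 (fun s => is_acc (f s) H2) <= exp (- ((E1 - delta) * INR n)) /\
        probN P2 (fun s => is_acc (f s) H1) <= exp (- ((E2 - delta) * INR n)) /\
        probN P1 (fun s => is_rej (f s)) + probN P2 (fun s => is_rej (f s))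
          <= exp (- ((gamma - delta) * INR n)).

(* R_gamma is contained in Rbar_gamma: stop a sequential test of R_gamma at time n and
   reject if it has not stopped yet; the two rejection probabilities add up to at most
   2 e^(-gamma n) <= e^(-(gamma - delta) n) for large n.

   Conversely, a test h with rejection option is turned into a sequential test: if h
   rejects after n samples, take J n more samples and decide by the likelihood-ratio
   test, whose errors are at most rho^(J n) for the Bhattacharyya coefficient rho < 1.
   This needs P_i(h rejects) <= e^(-gamma n) exactly, whereas Rbar_gamma only gives
   e^(-(gamma - eps) n).  The missing eps n is recovered by the method of types: take a
   test g of Rbar_gamma on n + k samples, k ~ n / K.  On n samples of type Q, h rejects
   only if the type class of Q has probability at most theta under both hypotheses,
   which costs a polynomial factor in the number of types; otherwise h outputs the
   majority decision of g on the type class of Q extended by a fixed likely k-type.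
   The error of h then exceeds that of g by a factor polynomial in n times e^(L k),
   where e^(-L) bounds both pmfs from below, and this is absorbed for K large. *)

From HB Require Import structures.
From Stdlib Require Import Reals Lra Classical FunctionalExtensionality.
From mathcomp Require Import all_boot zify.
Set Implicit Arguments. Unset Strict Implicit. Unset Printing Implicit Defensive.
Open Scope R_scope.

Lemma RplusA : associative Rplus. Proof. by move=> x y z; rewrite Rplus_assoc. Qed.
Lemma RmultA : associative Rmult. Proof. by move=> x y z; rewrite Rmult_assoc. Qed.
HB.instance Definition _ := Monoid.isComLaw.Build R 0 Rplus RplusA Rplus_comm Rplus_0_l.
HB.instance Definition _ := Monoid.isComLaw.Build R 1 Rmult RmultA Rmult_comm Rmult_1_l.
HB.instance Definition _ := Monoid.isMulLaw.Build R 0 Rmult Rmult_0_l Rmult_0_r.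
HB.instance Definition _ :=
  Monoid.isAddLaw.Build R Rmult Rplus Rmult_plus_distr_r Rmult_plus_distr_l.

Lemma hyp_eqbP : Equality.axiom hyp_eqb.
Proof. by case=> [] []; constructor. Qed.
HB.instance Definition _ := hasDecEq.Build hyp hyp_eqbP.

Lemma is_accE o h : is_acc o h = (o == Some h).
Proof. by case: o h => [[]|] []. Qed.

Lemma is_rejE o : is_rej o = (o == None).
Proof. by case: o. Qed.

Section RealSums.
Variable I : finType.
Implicit Types (P Q : pred I) (F G : I -> R).

Lemma sumR_ge0 P F : (forall i, 0 <= F i) -> 0 <= \big[Rplus/0]_(i | P i) F i.
Proof. by move=> F0; apply: big_ind => // *; lra. Qed.

Lemma sumR_le P F G : (forall i, P i -> F i <= G i) ->
  \big[Rplus/0]_(i | P i) F i <= \big[Rplus/0]_(i | P i) G i.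
Proof. by move=> FG; apply: big_ind2 => // *; lra. Qed.

Lemma sumR_lt (i0 : I) F G : (forall i, F i < G i) ->
  \big[Rplus/0]_i F i < \big[Rplus/0]_i G i.
Proof.
move=> FG; rewrite (bigD1 i0) // [X in _ < X](bigD1 i0) //=.
by apply: Rplus_lt_le_compat => //; apply: sumR_le => i _; apply: Rlt_le.
Qed.

Lemma sumR_subset P Q F : (forall i, 0 <= F i) -> subpred P Q ->
  \big[Rplus/0]_(i | P i) F i <= \big[Rplus/0]_(i | Q i) F i.
Proof.
move=> F0 PQ; rewrite [X in _ <= X](bigID P) /=.
have -> : \big[Rplus/0]_(i | Q i && P i) F i = \big[Rplus/0]_(i | P i) F i.
  by apply: eq_bigl => i; case: (boolP (P i)) => Pi; rewrite ?andbT ?andbF ?PQ.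
have := sumR_ge0 (fun i => Q i && ~~ P i) F0; lra.
Qed.

Lemma sumR_union P Q F : (forall i, 0 <= F i) ->
  \big[Rplus/0]_(i | P i || Q i) F i <=
  \big[Rplus/0]_(i | P i) F i + \big[Rplus/0]_(i | Q i) F i.
Proof.
move=> F0; rewrite (bigID P) /=.
have -> : \big[Rplus/0]_(i | (P i || Q i) && P i) F i = \big[Rplus/0]_(i | P i) F i.
  by apply: eq_bigl => i; case: (P i); case: (Q i).
by apply: Rplus_le_compat_l; apply: sumR_subset => // i /andP[/orP[->|]].
Qed.

Lemma sumR_const P c : \big[Rplus/0]_(i | P i) c = INR #|P| * c.
Proof.
rewrite big_const; elim: #|_| => [|k IH]; first by rewrite Rmult_0_l.
by rewrite iterS IH S_INR; ring.
Qed.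

End RealSums.

Lemma prodR_le n (a b : 'I_n -> R) : (forall i, 0 <= a i <= b i) ->
  0 <= \big[Rmult/1]_(i < n) a i <= \big[Rmult/1]_(i < n) b i.
Proof.
move=> ab; apply: (big_ind2 (fun x y => 0 <= x <= y)) => [|x1 x2 y1 y2 [? ?] [? ?]|//].
  by lra.
by split; [apply: Rmult_le_pos | apply: Rmult_le_compat].
Qed.

Lemma prodR_const n c : \big[Rmult/1]_(i < n) c = c ^ n.
Proof. by rewrite big_const_ord; elim: n => [|n IH] //=; rewrite IH. Qed.

Section SampleSpace.
Variable X : finType.
Implicit Types (f P : X -> R).

Definition pmfN f n (s : n.-tuple X) : R := \big[Rmult/1]_(i < n) f (tnth s i).

Definition tprefix n k (z : (n + k).-tuple X) : n.-tuple X :=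
  [tuple tnth z (lshift k i) | i < n].
Definition tsuffix n k (z : (n + k).-tuple X) : k.-tuple X :=
  [tuple tnth z (rshift n i) | i < k].

Lemma tprefix_cat n k (x : n.-tuple X) (y : k.-tuple X) : tprefix [tuple of x ++ y] = x.
Proof. by apply: eq_from_tnth => i; rewrite tnth_mktuple tnth_lshift. Qed.

Lemma tsuffix_cat n k (x : n.-tuple X) (y : k.-tuple X) : tsuffix [tuple of x ++ y] = y.
Proof. by apply: eq_from_tnth => i; rewrite tnth_mktuple tnth_rshift. Qed.

Lemma tcat_prefix_suffix n k (z : (n + k).-tuple X) :
  [tuple of tprefix z ++ tsuffix z] = z.
Proof.
apply: eq_from_tnth => i; case: (splitP i) => j ij.
- by rewrite (_ : i = lshift k j) ?tnth_lshift ?tnth_mktuple //; apply: val_inj.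
- by rewrite (_ : i = rshift n j) ?tnth_rshift ?tnth_mktuple //; apply: val_inj.
Qed.

Lemma pmfN_ge0 f n (s : n.-tuple X) : (forall x, 0 <= f x) -> 0 <= pmfN f s.
Proof. by move=> f0; apply: big_ind => // *; [lra | apply: Rmult_le_pos]. Qed.

Lemma pmfN_split f n k (z : (n + k).-tuple X) :
  pmfN f z = pmfN f (tprefix z) * pmfN f (tsuffix z).
Proof.
by rewrite /pmfN big_split_ord; congr Rmult; apply: eq_bigr => i _; rewrite tnth_mktuple.
Qed.

Lemma sum_pmfN_prod f n k (A : pred (n.-tuple X)) (B : pred (k.-tuple X)) :
  \big[Rplus/0]_(z : (n + k).-tuple X | A (tprefix z) && B (tsuffix z)) pmfN f z =
  (\big[Rplus/0]_(x | A x) pmfN f x) * (\big[Rplus/0]_(y | B y) pmfN f y).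
Proof.
rewrite big_distrlr pair_big /=.
rewrite (reindex (fun p : n.-tuple X * k.-tuple X => [tuple of p.1 ++ p.2])) /=; last first.
  exists (fun z => (tprefix z, tsuffix z)) => [[x y] _|z _] /=.
    by rewrite tprefix_cat tsuffix_cat.
  exact: tcat_prefix_suffix.
by apply: eq_big => [[x y]|[x y] _] /=; rewrite ?pmfN_split tprefix_cat tsuffix_cat.
Qed.

Lemma sum_pmfN f n : \big[Rplus/0]_(s : n.-tuple X) pmfN f s = (\big[Rplus/0]_x f x) ^ n.
Proof.
elim: n => [|n IH].
  rewrite (big_pred1 [tuple]) => [|s]; last by rewrite (tuple0 s) /= eqxx.
  by rewrite /pmfN big_ord0.
have := @sum_pmfN_prod f 1 n xpredT xpredT => /= ->; rewrite IH; congr (_ * _).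
rewrite (reindex (fun x : X => [tuple x])) /=; last first.
  exists (fun s : 1.-tuple X => thead s) => [x _ //|s _].
  by apply: eq_from_tnth => i; rewrite (ord1 i).
by apply: eq_bigr => x _; rewrite /pmfN big_ord1 (tnth_nth x).
Qed.

Lemma probNE P n (A : pred (n.-tuple X)) :
  probN P A = \big[Rplus/0]_(s | A s) pmfN P s.
Proof. by []. Qed.

Lemma probN_ext P n (A B : pred (n.-tuple X)) : A =1 B -> probN P A = probN P B.
Proof. by move=> AB; apply: eq_bigl. Qed.

Lemma probN_pred0 P n : probN P (pred0 : pred (n.-tuple X)) = 0.
Proof. by rewrite probNE big_pred0. Qed.

Variable P : X -> R.
Hypothesis pmfP : full_pmf P.

Lemma pmf_sum : \big[Rplus/0]_x P x = 1.
Proof. by case: pmfP. Qed.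

Lemma pmf_inhabited : inhabited X.
Proof.
case: (pickP (fun _ : X => true)) => [x _|none]; first by constructor.
by move: pmf_sum; rewrite big_pred0 //; lra.
Qed.

Lemma pmf_ge0 x : 0 <= P x.
Proof. by apply: Rlt_le; case: pmfP. Qed.

Lemma pmf_le1 x : P x <= 1.
Proof.
have := pmf_sum; rewrite (bigD1 x) //= => sum1.
have := sumR_ge0 (fun y => y != x) pmf_ge0; lra.
Qed.

Lemma probN_ge0 n (A : pred (n.-tuple X)) : 0 <= probN P A.
Proof. by apply: sumR_ge0 => s; apply: pmfN_ge0 pmf_ge0. Qed.

Lemma probN_subset n (A B : pred (n.-tuple X)) : subpred A B -> probN P A <= probN P B.
Proof. by apply: sumR_subset => s; apply: pmfN_ge0 pmf_ge0. Qed.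

Lemma probN_predT n : probN P (predT : pred (n.-tuple X)) = 1.
Proof. by rewrite probNE sum_pmfN pmf_sum pow1. Qed.

Lemma probN_le1 n (A : pred (n.-tuple X)) : probN P A <= 1.
Proof. by rewrite -(probN_predT n); apply: probN_subset. Qed.

Lemma probN_prefix n k (A : pred (n.-tuple X)) :
  probN P (fun z : (n + k).-tuple X => A (tprefix z)) = probN P A.
Proof.
rewrite -[RHS]Rmult_1_r -(probN_predT k) !probNE -sum_pmfN_prod.
by apply: eq_bigl => z; rewrite andbT.
Qed.

Lemma probN_prefix_or n k (A B : pred (n.-tuple X)) (C : pred (k.-tuple X)) :
  probN P (fun z : (n + k).-tuple X => A (tprefix z) || B (tprefix z) && C (tsuffix z)) <=
  probN P A + probN P B * probN P C.
Proof.
rewrite probNE; apply: Rle_trans (sumR_union _ _ _) _ => [z|].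
  exact: pmfN_ge0 pmf_ge0.
by rewrite sum_pmfN_prod -!probNE probN_prefix; right.
Qed.

End SampleSpace.

(** * An exponentially consistent test *)

Lemma exp_le x y : x <= y -> exp x <= exp y.
Proof. by case=> [/exp_increasing/Rlt_le | ->]; [| right]. Qed.

Lemma exp_mulINR n y : exp (INR n * y) = exp y ^ n.
Proof.
elim: n => [|n IH]; first by rewrite Rmult_0_l exp_0.
by rewrite S_INR Rmult_plus_distr_r Rmult_1_l exp_plus IH /=; ring.
Qed.

Section LikelihoodTest.
Variable X : finType.
Variables P1 P2 : X -> R.
Hypotheses (pmf1 : full_pmf P1) (pmf2 : full_pmf P2).

Definition bhattacharyya := \big[Rplus/0]_x sqrt (P1 x * P2 x).

Definition likelihood_test n (s : n.-tuple X) : hyp :=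
  if Rle_dec (pmfN P2 s) (pmfN P1 s) then H1 else H2.

Lemma bhattacharyya_gt0 : 0 < bhattacharyya.
Proof.
have [x] := pmf_inhabited pmf1.
rewrite /bhattacharyya (bigD1 x) //=; apply: Rplus_lt_le_0_compat.
  by apply: sqrt_lt_R0; apply: Rmult_lt_0_compat; [case: pmf1 | case: pmf2].
by apply: sumR_ge0 => y; apply: sqrt_pos.
Qed.

(* Both errors are at most [sum_s sqrt (P1^n s * P2^n s)], since the smaller of two
   nonnegative numbers is at most their geometric mean. *)
Lemma likelihood_test_error n :
  probN P1 (fun s : n.-tuple X => likelihood_test s == H2) <= bhattacharyya ^ n /\
  probN P2 (fun s : n.-tuple X => likelihood_test s == H1) <= bhattacharyya ^ n.
Proof.
pose b x := sqrt (P1 x * P2 x).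
have b2 s : pmfN b s * pmfN b s = pmfN P1 s * pmfN P2 s.
  rewrite /pmfN -!big_split; apply: eq_bigr => i _; apply: sqrt_sqrt.
  by apply: Rmult_le_pos; apply: pmf_ge0.
have min_le_gmean (p q w : R) : 0 <= w -> 0 <= p <= q -> p * q = w * w -> p <= w.
  move=> w0 [p0 pq] e; apply: Rnot_lt_le => wp.
  have := Rmult_le_compat_l p p q p0 pq; nra.
have b0 s : 0 <= pmfN b s by apply: pmfN_ge0 => x; apply: sqrt_pos.
rewrite /bhattacharyya -sum_pmfN; split; rewrite probNE;
  (apply: (Rle_trans _ (\big[Rplus/0]_(s | likelihood_test s == _) pmfN b s));
   [apply: sumR_le => s; rewrite /likelihood_test; case: Rle_dec => //= le21 _
   | exact: sumR_subset]).
- apply: (min_le_gmean _ (pmfN P2 s)) => //.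
  by split; [apply: pmfN_ge0 (pmf_ge0 pmf1) | lra].
- apply: (min_le_gmean _ (pmfN P1 s)) => //; last by rewrite Rmult_comm b2.
  by split; [apply: pmfN_ge0 (pmf_ge0 pmf2) | lra].
Qed.

Hypothesis P1_neq_P2 : P1 <> P2.

Lemma bhattacharyya_lt1 : bhattacharyya < 1.
Proof.
have [x0 neq0] : exists x, P1 x <> P2 x.
  apply: NNPP => all_eq; apply: P1_neq_P2; apply: functional_extensionality => x.
  by apply: NNPP => neq; apply: all_eq; exists x.
have am_gm x : sqrt (P1 x * P2 x) <= (P1 x + P2 x) / 2 /\
    (P1 x <> P2 x -> sqrt (P1 x * P2 x) < (P1 x + P2 x) / 2).
  set g := sqrt _; set m := (P1 x + P2 x) / 2.
  have g0 : 0 <= g by apply: sqrt_pos.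
  have m0 : 0 <= m by have := pmf_ge0 pmf1 x; have := pmf_ge0 pmf2 x; rewrite /m; lra.
  have gap : m * m - g * g = (P1 x - P2 x) * (P1 x - P2 x) / 4.
    rewrite /g sqrt_sqrt /m; first field.
    by apply: Rmult_le_pos; apply: pmf_ge0.
  split=> [|neq].
  - apply: Rnot_lt_le => lt_mg.
    have := Rmult_le_0_lt_compat _ _ _ _ m0 m0 lt_mg lt_mg.
    have := Rle_0_sqr (P1 x - P2 x); rewrite /Rsqr; lra.
  - apply: Rnot_le_lt => le_mg.
    have := Rmult_le_compat _ _ _ _ m0 m0 le_mg le_mg.
    have : 0 < (P1 x - P2 x) * (P1 x - P2 x) by apply: Rsqr_pos_lt; lra.
    lra.
have <- : \big[Rplus/0]_x ((P1 x + P2 x) / 2) = 1.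
  rewrite -(big_endo (fun y => y / 2)) => [|y z|]; last by rewrite /Rdiv Rmult_0_l.
    by rewrite big_split /= (pmf_sum pmf1) (pmf_sum pmf2); field.
  by rewrite /Rdiv Rmult_plus_distr_r.
rewrite /bhattacharyya (bigD1 x0) // [X in _ < X](bigD1 x0) //=.
apply: Rplus_lt_le_compat; first exact: (proj2 (am_gm x0)).
by apply: sumR_le => x _; case: (am_gm x).
Qed.

End LikelihoodTest.

Lemma exists_exponential_test (X : finType) (P1 P2 : X -> R) :
  full_pmf P1 -> full_pmf P2 -> P1 <> P2 ->
  exists r, 0 < r /\ forall n, exists T : n.-tuple X -> hyp,
    probN P1 (fun s => T s == H2) <= exp (- (r * INR n)) /\
    probN P2 (fun s => T s == H1) <= exp (- (r * INR n)).
Proof.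
move=> pmf1 pmf2 neq; have rho_gt0 : 0 < bhattacharyya P1 P2 := bhattacharyya_gt0 pmf1 pmf2.
have rho_lt1 := bhattacharyya_lt1 pmf1 pmf2 neq.
exists (- ln (bhattacharyya P1 P2)); split.
  by have := ln_increasing _ _ rho_gt0 rho_lt1; rewrite ln_1; lra.
move=> n; exists (@likelihood_test X P1 P2 n).
rewrite Ropp_mult_distr_l Ropp_involutive Rmult_comm exp_mulINR exp_ln //.
exact: likelihood_test_error.
Qed.

(** * From sequential tests to tests with rejection option *)

Section Truncation.
Variable X : finType.

Lemma stop_rule_prefix N (tau : N.-tuple X -> nat) d n (s s' : N.-tuple X) :
  stop_rule tau d -> (forall i : 'I_N, (i < n)%N -> tnth s i = tnth s' i) ->
  (tau s <= n)%N = (tau s' <= n)%N /\ ((tau s <= n)%N -> d s = d s').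
Proof.
move=> [_ stop] agree; case: (leqP (tau s) n) => [le_sn | lt_ns].
  have [eq_tau eq_d] := stop s s' (fun i lt_is => agree i (leq_trans lt_is le_sn)).
  by rewrite eq_tau eq_d le_sn.
split=> //; apply/esym/negbTE; rewrite -ltnNge; apply: contraTT lt_ns; rewrite -!leqNgt.
move=> le_s'n; have [-> _] := stop s' s (fun i lt_i => esym (agree i (leq_trans lt_i le_s'n))).
exact: le_s'n.
Qed.

Lemma truncate_stop_rule N (tau : N.-tuple X -> nat) d n :
  inhabited X -> stop_rule tau d ->
  exists f : n.-tuple X -> option hyp, forall P, full_pmf P ->
    (forall h, probN P (fun s => f s == Some h) <= probN P (fun z => d z == h)) /\
    probN P (fun s => f s == None) <= probN P (fun z => (n < tau z)%N).
Proof.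
move=> [x0] rule; case: (leqP N n) => [le_Nn | lt_nN].
  have [k ->] : exists k, n = (N + k)%N by exists (n - N)%N; rewrite subnKC.
  exists (fun s => Some (d (tprefix s))) => P pmfP; split => [h|].
    by rewrite -(probN_prefix pmfP k (fun z => d z == h)); right; apply: probN_ext.
  by rewrite (probN_ext _ (B := pred0)) // probN_pred0; apply: probN_ge0.
have [k Nnk] : exists k, N = (n + k)%N by exists (N - n)%N; rewrite subnKC // ltnW.
subst N; pose ext (x : n.-tuple X) : (n + k).-tuple X := [tuple of x ++ nseq k x0].
have ext_prefix z : (tau (ext (tprefix z)) <= n)%N = (tau z <= n)%N /\
    ((tau z <= n)%N -> d (ext (tprefix z)) = d z).
  have agree (i : 'I_(n + k)) : (i < n)%N -> tnth (ext (tprefix z)) i = tnth z i.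
    move=> lt_in; rewrite (_ : i = lshift k (Ordinal lt_in)); last exact: val_inj.
    by rewrite tnth_lshift tnth_mktuple.
  by have [-> eq_d] := stop_rule_prefix rule agree; split=> // /eq_d.
exists (fun x => if (tau (ext x) <= n)%N then Some (d (ext x)) else None) => P pmfP.
split=> [h|]; rewrite -(probN_prefix pmfP k);
  [apply: (probN_subset pmfP) | right; apply: probN_ext];
  move=> z /=; have [-> eq_d] := ext_prefix z.
  by case: leqP => // /eq_d ->.
by case: leqP.
Qed.

End Truncation.

Lemma exp_double_le g d n : 0 < d -> 1 <= d * n ->
  exp (- (g * n)) + exp (- (g * n)) <= exp (- ((g - d) * n)).
Proof.
move=> d0 dn; have -> : - ((g - d) * n) = - (g * n) + d * n by ring.
rewrite exp_plus; have := exp_ineq1_le (d * n); have := exp_pos (- (g * n)); nra.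
Qed.

Lemma in_R_in_Rbar_gamma (X : finType) (P1 P2 : X -> R) gamma E1 E2 :
  full_pmf P1 -> full_pmf P2 ->
  in_R_gamma P1 P2 gamma E1 E2 -> in_Rbar_gamma P1 P2 gamma E1 E2.
Proof.
move=> pmf1 pmf2 inR delta delta0; have [l [C [n0 [_ [_ tests]]]]] := inR delta delta0.
have [K K_gt] := INR_unbounded (/ delta).
exists (maxn n0 K) => n; rewrite geq_max => /andP[le_n0n le_Kn].
have delta_n : 1 <= delta * INR n.
  have : INR K <= INR n by apply: le_INR; apply/leP.
  have := Rinv_r delta; have := Rmult_lt_compat_l delta _ _ delta0 K_gt; nra.
have [N [tau [d [rule [_ [rej1 [rej2 [err1 err2]]]]]]]] := tests n le_n0n.
have [f fP] := truncate_stop_rule n (pmf_inhabited pmf1) rule.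
have [acc1 rejf1] := fP P1 pmf1; have [acc2 rejf2] := fP P2 pmf2.
exists f; split; [|split].
- by rewrite (probN_ext _ (B := fun s => f s == Some H2)) => [|s];
    [apply: Rle_trans (acc1 H2) err1 | rewrite is_accE].
- by rewrite (probN_ext _ (B := fun s => f s == Some H1)) => [|s];
    [apply: Rle_trans (acc2 H1) err2 | rewrite is_accE].
- rewrite !(probN_ext _ (A := fun s => is_rej (f s)) (B := fun s => f s == None)) => [|s|s];
    rewrite ?is_rejE //.
  by have := exp_double_le gamma delta0 delta_n; lra.
Qed.

(** * The method of types *)

Section Types.
Variable X : finType.
Implicit Types P : X -> R.

Definition ttype n (s : n.-tuple X) : {ffun X -> 'I_n.+1} :=
  [ffun x => inord (count_mem x s)].

Definition ntypes n : R := INR (n.+1 ^ #|X|).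

Definition type_add n k (Q : {ffun X -> 'I_n.+1}) (Q' : {ffun X -> 'I_k.+1}) :
  {ffun X -> 'I_(n + k).+1} := [ffun x => inord (Q x + Q' x)].

Definition type_prob P n (Q : {ffun X -> 'I_n.+1}) :=
  probN P (fun s : n.-tuple X => ttype s == Q).

Lemma ttypeE n (s : n.-tuple X) x : ttype s x = count_mem x s :> nat.
Proof. by rewrite ffunE inordK // ltnS (leq_trans (count_size _ s)) // size_tuple. Qed.

Lemma pmfN_ttype P n (s s' : n.-tuple X) : ttype s = ttype s' -> pmfN P s = pmfN P s'.
Proof.
move=> eq_type; have perm_ss' : perm_eq s s'.
  by apply/allP => x _ /=; rewrite -!ttypeE eq_type.
by rewrite /pmfN -!(big_tuple _ _ _ xpredT P); apply: perm_big.
Qed.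

Lemma ttype_split n k (z : (n + k).-tuple X) :
  ttype z = type_add (ttype (tprefix z)) (ttype (tsuffix z)).
Proof.
apply/ffunP => x; apply: ord_inj; rewrite /type_add ffunE inordK !ttypeE -count_cat.
  by rewrite -[in LHS](tcat_prefix_suffix z).
by rewrite ltnS (leq_trans (count_size _ _)) // size_cat !size_tuple.
Qed.

Lemma card_types n : #|{ffun X -> 'I_n.+1}| = (n.+1 ^ #|X|)%N.
Proof. by rewrite card_ffun card_ord. Qed.

Lemma probN_ttype P n (p : pred {ffun X -> 'I_n.+1}) :
  probN P (fun s : n.-tuple X => p (ttype s)) = \big[Rplus/0]_(Q | p Q) type_prob P Q.
Proof.
rewrite probNE (partition_big (@ttype n) p) //=.
apply: eq_bigr => Q pQ; apply: eq_bigl => s.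
by case: (boolP (ttype s == Q)) => [/eqP ->|]; rewrite ?pQ ?andbF.
Qed.

Lemma probN_ttype_le P n (p : pred {ffun X -> 'I_n.+1}) B : 0 <= B ->
  (forall Q, p Q -> type_prob P Q <= B) ->
  probN P (fun s : n.-tuple X => p (ttype s)) <= ntypes n * B.
Proof.
move=> B0 QB; rewrite probN_ttype /ntypes -card_types -(sumR_const predT).
apply: Rle_trans (sumR_le (G := fun _ => B) QB) _.
exact: sumR_subset.
Qed.

Lemma type_probM P n k (Q : {ffun X -> 'I_n.+1}) (Q' : {ffun X -> 'I_k.+1}) :
  full_pmf P -> type_prob P Q * type_prob P Q' <= type_prob P (type_add Q Q').
Proof.
move=> pmfP; rewrite /type_prob !probNE -sum_pmfN_prod.
apply: sumR_subset => [z|z /andP[/eqP eqQ /eqP eqQ']]; first exact: pmfN_ge0 (pmf_ge0 pmfP).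
by rewrite ttype_split eqQ eqQ'.
Qed.

Lemma type_prob_change P P' L n (Q : {ffun X -> 'I_n.+1}) :
  full_pmf P' -> (forall x, exp (- L) <= P x) ->
  exp (- L) ^ n * type_prob P' Q <= type_prob P Q.
Proof.
move=> pmfP' PL; rewrite /type_prob !probNE big_distrr /=; apply: sumR_le => s _.
have [P'0 P'1] := (pmf_ge0 pmfP', pmf_le1 pmfP').
have [_ /= le_Ls] := prodR_le (a := fun _ => exp (- L)) (b := fun i => P (tnth s i))
  (fun i => conj (Rlt_le _ _ (exp_pos _)) (PL _)).
have [_ /= le_s1] := prodR_le (a := fun i => P' (tnth s i)) (b := fun _ => 1)
  (fun i => conj (P'0 _) (P'1 _)).
rewrite prodR_const in le_Ls; rewrite prodR_const pow1 in le_s1.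
apply: (Rle_trans _ (exp (- L) ^ n * 1)); last by rewrite Rmult_1_r.
by apply: Rmult_le_compat_l; first exact/pow_le/Rlt_le/exp_pos.
Qed.

Lemma exists_likely_type P k : full_pmf P ->
  exists Q : {ffun X -> 'I_k.+1}, 1 <= ntypes k * type_prob P Q.
Proof.
move=> pmfP; apply: NNPP => none.
have all_small (Q : {ffun X -> 'I_k.+1}) : ntypes k * type_prob P Q < 1.
  by apply: Rnot_le_lt => big; apply: none; exists Q.
have := sumR_lt [ffun _ => ord0] all_small.
rewrite -big_distrr /= -(probN_ttype P xpredT) (probN_predT pmfP k).
by rewrite (sumR_const predT) /ntypes -card_types; apply: Rlt_irrefl.
Qed.

End Types.

Lemma INR_addn m n : INR (m + n)%N = INR m + INR n.
Proof. by rewrite -plusE plus_INR. Qed.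

Lemma INR_muln m n : INR (m * n)%N = INR m * INR n.
Proof. by rewrite -multE mult_INR. Qed.

Lemma INR_expn m e : INR (m ^ e)%N = INR m ^ e.
Proof. by elim: e => [|e IH]; rewrite ?expn0 // expnS INR_muln IH. Qed.

Section TypeVote.
Variables (X : finType) (m : nat) (g : m.-tuple X -> option hyp).

Definition vote_count (Q : {ffun X -> 'I_m.+1}) (j : option hyp) : nat :=
  #|fun z : m.-tuple X => (ttype z == Q) && (g z == j)|.

Definition type_vote Q : option hyp :=
  let c := vote_count Q in
  if (c None <= c (Some H1))%N && (c (Some H2) <= c (Some H1))%N then Some H1
  else if (c None <= c (Some H2))%N then Some H2 else None.

Lemma type_vote_count Q :
  (vote_count Q (Some H1) + vote_count Q (Some H2) + vote_count Q None <=
   3 * vote_count Q (type_vote Q))%N.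
Proof.
rewrite /type_vote; case: ifP => [/andP[] | /negbT]; first lia.
by rewrite negb_and -!ltnNge; case: ifP; lia.
Qed.

(* All samples of one type are equally likely, so the vote carries a third of the
   probability of the type class. *)
Lemma type_vote_majority P Q : full_pmf P ->
  type_prob P Q <= 3 * probN P (fun z => (ttype z == Q) && (g z == type_vote Q)).
Proof.
move=> pmfP; case: (pickP (fun z : m.-tuple X => ttype z == Q)) => [z0 /eqP z0Q|none];
  last first.
  rewrite /type_prob (probN_ext _ (B := pred0)) // probN_pred0.
  by have := probN_ge0 pmfP (fun z => (ttype z == Q) && (g z == type_vote Q)); lra.
have w0 := pmfN_ge0 z0 (pmf_ge0 pmfP).
have on_class j : probN P (fun z => (ttype z == Q) && (g z == j)) =
    INR (vote_count Q j) * pmfN P z0.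
  rewrite probNE -sumR_const; apply: eq_bigr => z /andP[/eqP zQ _].
  by apply: pmfN_ttype; rewrite zQ.
have split_class : type_prob P Q =
    probN P (fun z => (ttype z == Q) && (g z == Some H1)) +
    probN P (fun z => (ttype z == Q) && (g z == Some H2)) +
    probN P (fun z => (ttype z == Q) && (g z == None)).
  rewrite /type_prob !probNE (bigID (fun z => g z == Some H1)) /=.
  rewrite [X in _ + X](bigID (fun z => g z == Some H2)) /= Rplus_assoc.
  by congr (_ + (_ + _)); apply: eq_bigl => z; case: (ttype z == Q); case: (g z) => [[]|].
rewrite split_class !on_class -!Rmult_plus_distr_r -Rmult_assoc.
apply: Rmult_le_compat_r => //; have := le_INR _ _ (leP (type_vote_count Q)).
rewrite INR_muln !INR_addn (_ : INR 3 = 3) //; simpl; ring.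
Qed.

End TypeVote.

Section Compression.
Variables (X : finType) (P1 P2 : X -> R).
Hypotheses (pmf1 : full_pmf P1) (pmf2 : full_pmf P2).
Variables (n k : nat) (g : (n + k).-tuple X -> option hyp).
Variables (R1 R2 : {ffun X -> 'I_k.+1}) (theta : R).

Let Nk := ntypes X k.
Hypotheses (likely1 : 1 <= Nk * type_prob P1 R1) (likely2 : 1 <= Nk * type_prob P2 R2).

Definition compress_type (Q : {ffun X -> 'I_n.+1}) : option hyp :=
  if Rlt_dec theta (type_prob P1 Q) then type_vote g (type_add Q R1)
  else if Rlt_dec theta (type_prob P2 Q) then type_vote g (type_add Q R2)
  else None.

Definition compress (s : n.-tuple X) : option hyp := compress_type (ttype s).

Lemma type_vote_bound P Q R lab : full_pmf P -> type_vote g (type_add Q R) = lab ->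
  type_prob P Q * type_prob P R <= 3 * probN P (fun z => g z == lab).
Proof.
move=> pmfP vote; apply: Rle_trans (type_probM Q R pmfP) _.
apply: Rle_trans (type_vote_majority g _ pmfP) _; rewrite vote.
apply: Rmult_le_compat_l; first lra.
by apply: (probN_subset pmfP) => z /andP[].
Qed.

Lemma compress_rej (rej1 : 3 * Nk * probN P1 (fun z => g z == None) <= theta)
    (rej2 : 3 * Nk * probN P2 (fun z => g z == None) <= theta) Q :
  compress_type Q = None -> type_prob P1 Q <= theta /\ type_prob P2 Q <= theta.
Proof.
have voted P R : full_pmf P -> 1 <= Nk * type_prob P R ->
    3 * Nk * probN P (fun z => g z == None) <= theta -> theta < type_prob P Q ->
    type_vote g (type_add Q R) <> None.
  move=> pmfP likely rej lt_theta vote.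
  have bound : type_prob P Q * type_prob P R <= 3 * probN P (fun z => g z == None).
    exact: type_vote_bound pmfP vote.
  have Q0 : 0 <= type_prob P Q by apply: probN_ge0.
  have := Rmult_le_compat_l _ _ _ Q0 likely.
  have := Rmult_le_compat_l _ _ _ (pos_INR (k.+1 ^ #|X|) : 0 <= Nk) bound.
  rewrite -/Nk; lra.
rewrite /compress_type; case: Rlt_dec => [lt1|nlt1].
  by have := voted _ _ pmf1 likely1 rej1 lt1.
case: Rlt_dec => [lt2|nlt2 _]; first by have := voted _ _ pmf2 likely2 rej2 lt2.
by split; apply: Rnot_lt_le.
Qed.

Lemma compress_acc L P (lowerP : forall x, exp (- L) <= P x) (pmfP : full_pmf P) Q h :
  compress_type Q = Some h ->
  type_prob P Q <= 3 * Nk * exp (L * INR k) * probN P (fun z => g z == Some h).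
Proof.
have voted P' R : full_pmf P' -> 1 <= Nk * type_prob P' R ->
    type_vote g (type_add Q R) = Some h ->
    type_prob P Q <= 3 * Nk * exp (L * INR k) * probN P (fun z => g z == Some h).
  move=> pmfP' likely /(type_vote_bound pmfP) bound.
  have change := type_prob_change R pmfP' lowerP.
  have Q0 : 0 <= type_prob P Q by apply: probN_ge0.
  have NE0 : 0 <= Nk * exp (L * INR k).
    by apply: Rmult_le_pos; [apply: pos_INR | apply/Rlt_le/exp_pos].
  have cancel : type_prob P Q * (Nk * type_prob P' R) =
      Nk * exp (L * INR k) * (type_prob P Q * (exp (- L) ^ k * type_prob P' R)).
    have eE : exp (- L) ^ k * exp (L * INR k) = 1.
      by rewrite -exp_mulINR -exp_plus -exp_0; congr exp; ring.
    rewrite [RHS](_ : _ = type_prob P Q * (Nk * type_prob P' R) *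
      (exp (- L) ^ k * exp (L * INR k))); first by rewrite eE Rmult_1_r.
    ring.
  have := Rmult_le_compat_l _ _ _ Q0 likely.
  have := Rmult_le_compat_l _ _ _ NE0 (Rmult_le_compat_l _ _ _ Q0 change).
  have := Rmult_le_compat_l _ _ _ NE0 bound.
  rewrite cancel; lra.
rewrite /compress_type; case: Rlt_dec => [lt1|nlt1]; first exact: voted pmf1 likely1.
by case: Rlt_dec => [lt2|nlt2 //]; apply: voted pmf2 likely2.
Qed.

Let Nn := ntypes X n.

Lemma probN_compress_rej
    (rej1 : 3 * Nk * probN P1 (fun z => g z == None) <= theta)
    (rej2 : 3 * Nk * probN P2 (fun z => g z == None) <= theta) (theta0 : 0 <= theta) :
  probN P1 (fun s => compress s == None) <= Nn * theta /\
  probN P2 (fun s => compress s == None) <= Nn * theta.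
Proof.
rewrite /compress /Nn; split;
  by apply: (probN_ttype_le (p := fun Q => compress_type Q == None)) => // Q
    /eqP/(compress_rej rej1 rej2)[].
Qed.

Lemma probN_compress_acc L P (lowerP : forall x, exp (- L) <= P x) (pmfP : full_pmf P) h :
  probN P (fun s => compress s == Some h) <=
  Nn * (3 * Nk * exp (L * INR k) * probN P (fun z => g z == Some h)).
Proof.
have Nk0 : 0 <= Nk by apply: pos_INR.
rewrite /compress /Nn.
apply: (probN_ttype_le (p := fun Q => compress_type Q == Some h)) => [|Q /eqP];
  last exact: compress_acc.
apply: Rmult_le_pos; last exact: probN_ge0.
by apply: Rmult_le_pos; [lra | apply/Rlt_le/exp_pos].
Qed.

End Compression.

(** * Tightening the rejection exponent *)

Lemma succ_le_exp c : 0 < c ->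
  exists n1, forall n, (n1 <= n)%N -> INR n + 1 <= exp (c * INR n).
Proof.
move=> c0; have [n1 n1_gt] := INR_unbounded (4 / (c * c)).
exists n1 => n le_n1n; have n0 := pos_INR n.
have n_large : 4 <= c * c * INR n.
  have : INR n1 <= INR n by apply: le_INR; apply/leP.
  have := Rmult_lt_compat_r (c * c) _ _ (Rmult_lt_0_compat _ _ c0 c0) n1_gt.
  rewrite /Rdiv Rmult_assoc Rinv_l; nra.
(* (1 + a)^2 <= exp (2 a) for a = c n / 2, and a^2 >= n. *)
pose a := c * INR n / 2.
have a0 : 0 <= a by rewrite /a; nra.
have n_le_a2 : INR n <= a * a.
  rewrite /a (_ : c * INR n / 2 * (c * INR n / 2) = c * c * INR n * INR n / 4); last field.
  have := Rmult_le_compat_r _ _ _ n0 n_large; lra.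
have ea := exp_ineq1_le a.
rewrite (_ : c * INR n = a + a); last by rewrite /a; field.
have a1 : 0 <= 1 + a by lra.
by rewrite exp_plus; have := Rmult_le_compat _ _ _ _ a1 a1 ea ea; nra.
Qed.

Lemma poly_le_exp eps d : 0 < eps ->
  exists n1, forall n, (n1 <= n)%N -> INR (n.+1 ^ d) <= exp (eps * INR n).
Proof.
move=> eps0; case: d => [|d].
  by exists 0%N => n _; rewrite expn0; have := exp_ineq1_le (eps * INR n);
    have := pos_INR n; simpl; nra.
have [n1 n1P] := succ_le_exp (Rdiv_lt_0_compat _ _ eps0 (lt_0_INR d.+1 (Nat.lt_0_succ d))).
exists n1 => n /n1P le_n; rewrite INR_expn S_INR.
rewrite (_ : eps * INR n = INR d.+1 * (eps / INR d.+1 * INR n)); last first.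
  by field; apply: not_0_INR.
by rewrite exp_mulINR; apply: pow_incr; have := pos_INR n; lra.
Qed.

Lemma types_count_le n k d : (k <= n)%N -> (0 < n)%N ->
  (6 * (k.+1 ^ d * n.+1 ^ d) <= n.+1 ^ (d + d + 3))%N.
Proof.
move=> le_kn n0.
have le_kd : (k.+1 ^ d <= n.+1 ^ d)%N by case: d => [|d] //; rewrite leq_exp2r.
have le_63 : (6 <= n.+1 ^ 3)%N.
  by apply: leq_trans (_ : 2 ^ 3 <= n.+1 ^ 3)%N; rewrite // leq_exp2r.
by rewrite !expnD mulnC; apply: leq_mul => //; apply: leq_mul.
Qed.

(* The factor 6 is the factor 3 of the majority vote times the factor 2 spent on the
   second stage of the sequential test. *)
Lemma ntypes_le_exp (X : finType) eps : 0 < eps ->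
  exists n1, forall n k, (n1 <= n)%N -> (0 < n)%N -> (k <= n)%N ->
    6 * (ntypes X k * ntypes X n) <= exp (eps * INR n).
Proof.
move=> eps0; have [n1 poly] := poly_le_exp (#|X| + #|X| + 3) eps0.
exists n1 => n k le_n1n n0 le_kn; apply: Rle_trans (poly n le_n1n).
have /leP/le_INR := types_count_le #|X| le_kn n0.
by rewrite !INR_muln /ntypes (_ : INR 6 = 6) //=; ring.
Qed.

Lemma exists_exp_lower_bound (X : finType) (P1 P2 : X -> R) :
  full_pmf P1 -> full_pmf P2 ->
  exists L, forall x, exp (- L) <= P1 x /\ exp (- L) <= P2 x.
Proof.
have ln_le0 (P : X -> R) y : full_pmf P -> 0 <= - ln (P y).
  move=> pmfP; apply: Rnot_lt_le => lt0.
  have := exp_ineq1_le (ln (P y)); rewrite exp_ln; last by case: pmfP.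
  by have := pmf_le1 pmfP y; lra.
move=> pmf1 pmf2; pose l y := - ln (P1 y) + - ln (P2 y).
have [l0 le_l] : (forall y, 0 <= l y) /\ forall y, - ln (P1 y) <= l y /\ - ln (P2 y) <= l y.
  by split=> y; have := ln_le0 P1 y pmf1; have := ln_le0 P2 y pmf2; rewrite /l; lra.
exists (\big[Rplus/0]_y l y) => x.
have lx : l x <= \big[Rplus/0]_y l y.
  by rewrite (bigD1 x) //=; have := sumR_ge0 (fun y => y != x) l0; lra.
have lower (P : X -> R) : full_pmf P -> - ln (P x) <= l x -> exp (- \big[Rplus/0]_y l y) <= P x.
  by move=> [P0 _] le_lx; rewrite -[P x]exp_ln //; apply: exp_le; lra.
by have [? ?] := le_l x; split; apply: lower.
Qed.

Lemma exp_absorb A a b : 0 <= A -> A <= exp a -> A * exp b <= exp (a + b).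
Proof. by move=> A0 Aa; rewrite exp_plus; apply: Rmult_le_compat_r => //; apply/Rlt_le/exp_pos. Qed.

Lemma rejection_exponent_le A eps gamma K n k :
  0 <= eps -> 8 * K * eps <= gamma -> n <= 2 * K * k -> 0 <= k <= n ->
  0 <= A -> A <= exp (eps * n) ->
  A * exp (- ((gamma - eps) * (n + k))) <= exp (- (gamma * n)).
Proof.
move=> eps0 gammaK nk [k0 kn] A0 An; apply: Rle_trans (exp_absorb _ A0 An) _; apply: exp_le.
have := Rmult_le_compat_r _ _ _ k0 gammaK; have := Rmult_le_compat_l (4 * eps) _ _ _ nk.
nra.
Qed.

Lemma error_exponent_le A eps delta E L n k :
  0 <= eps <= delta / 4 -> eps <= E -> 4 * L * k <= delta * n -> 0 <= k -> 0 <= n ->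
  0 <= A -> 2 * A <= exp (eps * n) ->
  A * exp (L * k) * exp (- ((E - eps) * (n + k))) <= / 2 * exp (- ((E - delta) * n)).
Proof.
move=> [eps0 eps_delta] epsE Lk k0 n0 A0 An.
rewrite (_ : A * _ * _ = / 2 * (2 * A * exp (L * k - (E - eps) * (n + k)))); last first.
  by rewrite /Rminus exp_plus; field.
apply: Rmult_le_compat_l; first lra.
apply: Rle_trans (exp_absorb _ _ An) _ => //; first lra.
by apply: exp_le; nra.
Qed.

Lemma divn_bounds n K : (0 < K)%N -> (2 * K <= n)%N ->
  INR n <= 2 * INR K * INR (n %/ K) /\ INR K * INR (n %/ K) <= INR n.
Proof.
move=> K0 le_2Kn; have := leq_divM n K; have := ltn_ceil n K0; rewrite mulSn => lt_n le_n.
have le1 : (n <= 2 * K * (n %/ K))%N by lia.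
have le2 : (K * (n %/ K) <= n)%N by lia.
by split; [move/leP/le_INR: le1 | move/leP/le_INR: le2]; rewrite !INR_muln.
Qed.

Section Tightening.
Variables (X : finType) (P1 P2 : X -> R).
Hypotheses (pmf1 : full_pmf P1) (pmf2 : full_pmf P2).

Definition sharp_test gamma E1 E2 delta n (h : n.-tuple X -> option hyp) : Prop :=
  [/\ probN P1 (fun s => h s == None) <= exp (- (gamma * INR n)),
      probN P2 (fun s => h s == None) <= exp (- (gamma * INR n)),
      delta < E1 -> probN P1 (fun s => h s == Some H2) <= / 2 * exp (- ((E1 - delta) * INR n)) &
      delta < E2 -> probN P2 (fun s => h s == Some H1) <= / 2 * exp (- ((E2 - delta) * INR n))].

Lemma sharp_test_reject_all E1 E2 delta n :
  sharp_test 0 E1 E2 delta (fun _ : n.-tuple X => None).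
Proof.
rewrite /sharp_test Rmult_0_l Ropp_0 exp_0.
split=> [||_|_]; try exact: probN_le1.
all: rewrite (probN_ext _ (B := pred0)) // probN_pred0.
all: by apply: Rmult_le_pos; [lra | apply/Rlt_le/exp_pos].
Qed.

Lemma compressed_sharp_test n k (g : (n + k).-tuple X -> option hyp) gamma E1 E2 eps delta L :
  (forall x, exp (- L) <= P1 x /\ exp (- L) <= P2 x) ->
  probN P1 (fun z => is_acc (g z) H2) <= exp (- ((E1 - eps) * INR (n + k))) ->
  probN P2 (fun z => is_acc (g z) H1) <= exp (- ((E2 - eps) * INR (n + k))) ->
  probN P1 (fun z => is_rej (g z)) + probN P2 (fun z => is_rej (g z)) <=
    exp (- ((gamma - eps) * INR (n + k))) ->
  3 * ntypes X k * ntypes X n * exp (- ((gamma - eps) * INR (n + k))) <=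
    exp (- (gamma * INR n)) ->
  (forall E, delta < E -> 3 * ntypes X k * ntypes X n * exp (L * INR k) *
    exp (- ((E - eps) * INR (n + k))) <= / 2 * exp (- ((E - delta) * INR n))) ->
  exists h : n.-tuple X -> option hyp, sharp_test gamma E1 E2 delta h.
Proof.
move=> lower err1 err2 rej rej_small err_small.
have [R1 likely1] := exists_likely_type k pmf1.
have [R2 likely2] := exists_likely_type k pmf2.
have Nk0 : 0 <= ntypes X k by apply: pos_INR.
have Nn0 : 0 <= ntypes X n by apply: pos_INR.
set r := exp (- ((gamma - eps) * INR (n + k))) in rej rej_small.
have rej_le P : full_pmf P -> probN P (fun z => is_rej (g z)) <= r ->
    3 * ntypes X k * probN P (fun z => g z == None) <= 3 * ntypes X k * r.
  move=> pmfP le_r; apply: Rmult_le_compat_l; first lra.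
  by rewrite (probN_ext _ (B := fun z => is_rej (g z))) // => z; rewrite is_rejE.
have rej1 := rej_le _ pmf1 ltac:(have := probN_ge0 pmf2 (fun z => is_rej (g z)); lra).
have rej2 := rej_le _ pmf2 ltac:(have := probN_ge0 pmf1 (fun z => is_rej (g z)); lra).
have r0 : 0 <= 3 * ntypes X k * r by apply: Rmult_le_pos; [lra | apply/Rlt_le/exp_pos].
have [rejc1 rejc2] := probN_compress_rej pmf1 pmf2 likely1 likely2 rej1 rej2 r0.
set theta := 3 * ntypes X k * r.
have acc_le P E h : (forall x, exp (- L) <= P x) -> full_pmf P ->
    probN P (fun z => is_acc (g z) h) <= exp (- ((E - eps) * INR (n + k))) -> delta < E ->
    probN P (fun s => compress P1 P2 g R1 R2 theta s == Some h) <=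
    / 2 * exp (- ((E - delta) * INR n)).
  move=> lowerP pmfP err /err_small; apply: Rle_trans.
  apply: Rle_trans (probN_compress_acc pmf1 pmf2 g _ likely1 likely2 lowerP pmfP h) _.
  rewrite [X in _ <= X](_ : _ = ntypes X n * (3 * ntypes X k * exp (L * INR k)) *
    exp (- ((E - eps) * INR (n + k)))); last ring.
  rewrite -Rmult_assoc; apply: Rmult_le_compat_l.
    by apply: Rmult_le_pos => //; apply: Rmult_le_pos; [lra | apply/Rlt_le/exp_pos].
  by apply: Rle_trans err; right; apply: probN_ext => z; rewrite is_accE.
exists (compress P1 P2 g R1 R2 theta); split.
- by apply: Rle_trans rejc1 _; apply: Rle_trans rej_small; right; rewrite /theta; ring.
- by apply: Rle_trans rejc2 _; apply: Rle_trans rej_small; right; rewrite /theta; ring.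
- exact: acc_le (fun x => proj1 (lower x)) pmf1 err1.
- exact: acc_le (fun x => proj2 (lower x)) pmf2 err2.
Qed.

Lemma tighten_rejection gamma E1 E2 delta : 0 <= gamma -> 0 < delta ->
  in_Rbar_gamma P1 P2 gamma E1 E2 ->
  exists n1, forall n, (n1 <= n)%N ->
    exists h : n.-tuple X -> option hyp, sharp_test gamma E1 E2 delta h.
Proof.
move=> gamma0 delta0 inRbar; case: (Rle_lt_or_eq_dec _ _ gamma0) => [gamma_gt0 | <-]; last first.
  by exists 0%N => n _; exists (fun _ => None); apply: sharp_test_reject_all.
have [L lower] := exists_exp_lower_bound pmf1 pmf2.
have [K K_gt] := INR_unbounded (Rmax 1 (4 * L / delta)).
have K1 : 1 < INR K by apply: Rle_lt_trans K_gt; apply: Rmax_l.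
have K0 : (0 < K)%N by apply/ltP/INR_lt; simpl; lra.
have LK : 4 * L <= delta * INR K.
  have := Rmult_lt_compat_l _ _ _ delta0 (Rle_lt_trans _ _ _ (Rmax_r 1 _) K_gt).
  by rewrite (_ : delta * (4 * L / delta) = 4 * L); [lra | field; lra].
pose eps := Rmin (delta / 4) (gamma / (8 * INR K)).
have eps0 : 0 < eps by apply: Rmin_pos; [lra | apply: Rdiv_lt_0_compat; lra].
have [eps_delta eps_gamma] : eps <= delta / 4 /\ 8 * INR K * eps <= gamma.
  split; first exact: Rmin_l.
  have := Rmult_le_compat_l (8 * INR K) _ _ ltac:(lra) (Rmin_r (delta / 4) (gamma / (8 * INR K))).
  by rewrite (_ : 8 * INR K * (gamma / (8 * INR K)) = gamma) //; field; lra.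
have [n0 tests] := inRbar eps eps0.
have [n1 types_small] := ntypes_le_exp X eps0.
exists (maxn (maxn n0 n1) (2 * K)) => n; rewrite !geq_max => /andP[/andP[le_n0 le_n1] le_2K].
have [n_le_Kk Kk_le_n] := divn_bounds K0 le_2K.
set k := (n %/ K)%N in n_le_Kk Kk_le_n.
have [g [err1 [err2 rej]]] := tests (n + k)%N (leq_trans le_n0 (leq_addr _ _)).
have k_le_n : (k <= n)%N by apply: leq_div.
have k_le : 0 <= INR k <= INR n by split; [apply: pos_INR | apply/le_INR/leP].
have n_gt0 : (0 < n)%N by apply: leq_trans le_2K; rewrite muln_gt0 K0.
have A_small := types_small n k le_n1 n_gt0 k_le_n.
have A0 : 0 <= 3 * ntypes X k * ntypes X n.
  by apply: Rmult_le_pos; [apply: Rmult_le_pos; [lra | apply: pos_INR] | apply: pos_INR].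
apply: (compressed_sharp_test (eps := eps) lower err1 err2 rej) => [|E E_gt].
  by rewrite INR_addn; apply: (rejection_exponent_le (K := INR K)) => //; lra.
rewrite INR_addn; apply: error_exponent_le => //; try lra.
have := Rmult_le_compat_l _ _ _ (Rlt_le _ _ delta0) Kk_le_n.
by have := Rmult_le_compat_r _ _ _ (proj1 k_le) LK; lra.
Qed.

End Tightening.

(** * From tests with rejection option to sequential tests *)

Section TwoStage.
Variables (X : finType) (n k : nat).
Variables (h : n.-tuple X -> option hyp) (T : k.-tuple X -> hyp).

Definition two_stage_time (z : (n + k).-tuple X) : nat :=
  if h (tprefix z) is None then (n + k)%N else n.

Definition two_stage_decision (z : (n + k).-tuple X) : hyp :=
  if h (tprefix z) is Some v then v else T (tsuffix z).

Lemma two_stage_stop_rule : stop_rule two_stage_time two_stage_decision.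
Proof.
split=> [z|z z' agree]; first by rewrite /two_stage_time; case: (h _) => // _; apply: leq_addr.
rewrite /two_stage_time in agree; case hz: (h (tprefix z)) agree => [v|] agree.
  have eq_prefix : tprefix z' = tprefix z.
    by apply: eq_from_tnth => i; rewrite !tnth_mktuple (agree (lshift k i) (ltn_ord i)).
  by rewrite /two_stage_time /two_stage_decision eq_prefix hz.
by have -> : z' = z by apply: eq_from_tnth => i; rewrite agree.
Qed.

Lemma probN_two_stage_late P : full_pmf P -> (0 < k)%N ->
  probN P (fun z => (n < two_stage_time z)%N) = probN P (fun x => h x == None).
Proof.
move=> pmfP k0; rewrite -(probN_prefix pmfP k (fun x => h x == None)); apply: probN_ext => z.
by rewrite /two_stage_time; case: (h _) => [v|] /=; rewrite ?ltnn // -addn1 leq_add2l.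
Qed.

Lemma probN_two_stage_error P v : full_pmf P ->
  probN P (fun z => two_stage_decision z == v) <=
  probN P (fun x => h x == Some v) + probN P (fun x => h x == None) * probN P (fun y => T y == v).
Proof.
move=> pmfP; apply: Rle_trans (probN_prefix_or pmfP (fun x => h x == Some v)
  (fun x => h x == None) (fun y => T y == v)).
apply: (probN_subset pmfP) => z; rewrite /two_stage_decision.
by case: (h _) => [w /eqP ->|] /=; rewrite ?eqxx.
Qed.

End TwoStage.

Lemma second_stage_exponent_le r J E delta n : 0 < r -> E + 1 <= r * INR J -> 0 < delta ->
  (0 < n)%N -> exp (- (r * INR (J * n))) <= / 2 * exp (- ((E - delta) * INR n)).
Proof.
move=> r0 EJ delta0 n0; have n1 : 1 <= INR n by apply: (le_INR 1); apply/leP.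
rewrite INR_muln; apply: Rle_trans (_ : _ <= exp (- ((E - delta) * INR n) + - 1)) _.
  by apply: exp_le; have := Rmult_le_compat_r _ _ _ (pos_INR n) EJ; nra.
rewrite exp_plus Rmult_comm (exp_Ropp 1).
apply: Rmult_le_compat_r; first exact: Rlt_le (exp_pos _).
by apply: Rinv_le_contravar; [lra | have := exp_ineq1_le 1; lra].
Qed.

Lemma in_Rbar_in_R_gamma (X : finType) (P1 P2 : X -> R) gamma E1 E2 :
  full_pmf P1 -> full_pmf P2 -> P1 <> P2 -> 0 <= gamma ->
  in_Rbar_gamma P1 P2 gamma E1 E2 -> in_R_gamma P1 P2 gamma E1 E2.
Proof.
move=> pmf1 pmf2 neq gamma0 inRbar delta delta0.
have [r [r0 tests]] := exists_exponential_test pmf1 pmf2 neq.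
have [J [J0 J_gt]] : exists J, (0 < J)%N /\ (Rmax E1 E2 + 1) / r < INR J.
  have [J J_gt] := INR_unbounded ((Rmax E1 E2 + 1) / r).
  by exists J.+1; split => //; rewrite S_INR; lra.
have rJ E : E <= Rmax E1 E2 -> E + 1 <= r * INR J.
  have := Rmult_lt_compat_l _ _ _ r0 J_gt.
  by rewrite (_ : r * ((Rmax E1 E2 + 1) / r) = Rmax E1 E2 + 1); [lra | field; lra].
have [n1 sharp] := tighten_rejection pmf1 pmf2 gamma0 delta0 inRbar.
exists 1%N, (INR J + 1), (maxn n1 1); split=> //; split; first by have := pos_INR J; lra.
move=> n; rewrite geq_max => /andP[le_n1 n0].
have [h [rej1 rej2 acc1 acc2]] := sharp n le_n1.
have [T [T1 T2]] := tests (J * n)%N.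
have err_le P E v : full_pmf P -> E <= Rmax E1 E2 ->
    (delta < E -> probN P (fun x => h x == Some v) <= / 2 * exp (- ((E - delta) * INR n))) ->
    probN P (fun y => T y == v) <= exp (- (r * INR (J * n))) ->
    probN P (fun z => two_stage_decision h T z == v) <= exp (- ((E - delta) * INR n)).
  move=> pmfP EJ acc Tv; case: (Rlt_le_dec delta E) => [dE | Ed].
    apply: Rle_trans (probN_two_stage_error _ _ _ pmfP) _.
    have := acc dE; have := second_stage_exponent_le r0 (rJ _ EJ) delta0 n0.
    have := probN_le1 pmfP (fun x : n.-tuple X => h x == None).
    have := probN_ge0 pmfP (fun x : n.-tuple X => h x == None).
    have := probN_ge0 pmfP (fun y : (J * n).-tuple X => T y == v); nra.
  apply: Rle_trans (probN_le1 pmfP _) _; rewrite -exp_0; apply: exp_le.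
  by have := pos_INR n; nra.
exists (n + J * n)%N, (two_stage_time h), (two_stage_decision h T).
split; [exact: two_stage_stop_rule | split; [| split; [| split; [| split]]]].
- move=> z; rewrite pow_1; apply: Rle_trans (_ : _ <= INR (n + J * n)) _.
    by apply/le_INR/leP; rewrite /two_stage_time; case: (h _) => // _; apply: leq_addr.
  by rewrite INR_addn INR_muln; right; ring.
- by rewrite probN_two_stage_late // muln_gt0 J0.
- by rewrite probN_two_stage_late // muln_gt0 J0.
- exact: err_le pmf1 (Rmax_l _ _) acc1 T1.
- exact: err_le pmf2 (Rmax_r _ _) acc2 T2.
Qed.

Unset Implicit Arguments.

Theorem lemma1 (X : finType) (P1 P2 : X -> R)
  (hP1 : full_pmf P1) (hP2 : full_pmf P2) (hneq : P1 <> P2)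
  (gamma : R) (hgamma : 0 <= gamma) (E1 E2 : R) :
  in_Rbar_gamma P1 P2 gamma E1 E2 <-> in_R_gamma P1 P2 gamma E1 E2.
Proof.
split; [exact: in_Rbar_in_R_gamma | exact: in_R_in_Rbar_gamma].
Qed.
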